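(* Let $0<\mu\le L$, $C>0$, and $0<\gamma<1$. Let $f_1,f_2,\dots:\mathbb{R}^d\to\mathbb{R}$ be differentiable functions, each $L$-smooth and $\mu$-strongly convex, whose minimizers $\mathbf{w}^*_t=\arg\min_{\mathbf{w}} f_t(\mathbf{w})$ satisfy $\|\mathbf{w}^*_t\|\le C$ for all $t\ge1$. Define $F_t(\mathbf{w})=\sum_{i=1}^t \frac{1-\gamma}{1-\gamma^t}\gamma^{t-i}f_i(\mathbf{w})$ and $\overline{\mathbf{w}}^*_t=\arg\min_{\mathbf{w}}F_t(\mathbf{w})$. Let $\eta$ satisfy $0<\eta\le\frac{2}{\mu+L}$ and $\eta\mu<1$, and let $E\ge1$ be an integer. Starting from arbitrary $\mathbf{w}_0\in\mathbb{R}^d$, for each $t\ge0$ set $\mathbf{w}_{t,0}=\mathbf{w}_t$, $\mathbf{w}_{t,k+1}=\mathbf{w}_{t,k}-\eta\nabla F_{t+1}(\mathbf{w}_{t,k})$ for $k=0,\dots,E-1$, and $\mathbf{w}_{t+1}=\mathbf{w}_{t,E}$. Let $C'=\left(1+\sqrt{L/\mu}\right)\frac{LC}{\mu}$ and let $\epsilon>0$. If $$E\ge\frac{\ln\left(\frac{\epsilon}{C'(1-\gamma)+\epsilon}\right)}{\ln(1-\eta\mu)},$$ then $\limsup_{t\to\infty}\|\mathbf{w}_t-\overline{\mathbf{w}}^*_t\|\le\epsilon$. Consequently, the number of gradient updates per time step needed to achieve asymptotic tracking error at most $\epsilon$ is $\mathcal{O}(\ln(1/\epsilon))$ as $\ep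silon\to0$.
   Context: A function $f$ is $L$-smooth if $\|\nabla f(\mathbf{x})-\nabla f(\mathbf{y})\|\le L\|\mathbf{x}-\mathbf{y}\|$ for all $\mathbf{x},\mathbf{y}$, and $\mu$-strongly convex if $f(\mathbf{y})\ge f(\mathbf{x})+\nabla f(\mathbf{x})^\top(\mathbf{y}-\mathbf{x})+\frac{\mu}{2}\|\mathbf{y}-\mathbf{x}\|^2$ for all $\mathbf{x},\mathbf{y}$. The quantity $\limsup_{t\to\infty}\|\mathbf{w}_t-\overline{\mathbf{w}}^*_t\|$ is called the asymptotic tracking error. *)

From HB Require Import structures.
From mathcomp Require Import all_boot all_order all_algebra.
From mathcomp Require Import all_classical all_reals all_analysis.
Set Implicit Arguments. Unset Strict Implicit. Unset Printing Implicit Defensive.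
Import Order.TTheory GRing.Theory Num.Theory.
Import numFieldNormedType.Exports.
Local Open Scope ring_scope.

Section Defs.
Variables (R : realType) (d : nat).
Notation vec := 'rV[R]_d.

Definition dotv (u v : vec) : R := \sum_(i < d) u ord0 i * v ord0 i.
Definition enorm (u : vec) : R := Num.sqrt (dotv u u).

Definition grad (f : vec -> R) (x : vec) : vec :=
  \row_(i < d) ('d f x : vec -> R) (delta_mx ord0 i).

Definition L_smooth (L : R) (f : vec -> R) : Prop :=
  forall x y, enorm (grad f x - grad f y) <= L * enorm (x - y).

Definition strongly_convex (mu : R) (f : vec -> R) : Prop :=
  forall x y, f x + dotv (grad f x) (y - x) + mu / 2 * enorm (y - x) ^+ 2 <= f y.

Definition is_minimizer (f : vec -> R) (w : vec) : Prop :=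
  forall v, f w <= f v.

Definition Favg (gamma : R) (f : nat -> vec -> R) (t : nat) (w : vec) : R :=
  \sum_(1 <= i < t.+1) ((1 - gamma) / (1 - gamma ^+ t) * gamma ^+ (t - i) * f i w).

Definition gd_steps (eta : R) (F : vec -> R) (E : nat) (w : vec) : vec :=
  iter E (fun v => v - eta *: grad F v) w.
End Defs.

Definition Cprime (R : realType) (mu L C : R) : R :=
  (1 + Num.sqrt (L / mu)) * (L * C / mu).

Definition E_threshold (R : realType) (mu L C gamma eta eps : R) : R :=
  ln (eps / (Cprime mu L C * (1 - gamma) + eps)) / ln (1 - eta * mu).

(* Each [F_t] is a convex combination of the [f_i], hence L-smooth and
   mu-strongly convex, so the [E] gradient steps on [F_(t+1)] contract the
   distance to its minimizer by [rho = (1 - eta mu)^E].  Comparing the quadratic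
   bounds of the [f_i] around their minimizers, at [wbar_t] and at the barycenter
   of those minimizers, keeps [wbar_t] in the ball of radius [sqrt (L / mu) C].
   Passing from [F_t] to [F_(t+1)] only adds [f_(t+1)], with a weight tending to
   [1 - gamma]; by strong monotonicity the drift [|wbar_t - wbar_(t+1)|] is then
   eventually at most [(1 - gamma) C'].  The tracking error therefore satisfies
   [e_(t+1) <= rho (e_t + drift_t)], so its limsup is at most
   [rho (1 - gamma) C' / (1 - rho)], which the lower bound on [E] makes [<= eps];
   that bound is [ln (eps / ((1 - gamma) C' + eps)) / ln (1 - eta mu) = O (ln (1 / eps))]. *)

From HB Require Import structures.
From mathcomp Require Import all_boot all_order all_algebra.
From mathcomp Require Import all_classical all_reals all_analysis.
From mathcomp Require Import ring lra.
Import Order.TTheory GRing.Theory Num.Theory.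
Import numFieldNormedType.Exports.
Local Open Scope ring_scope.
Set Implicit Arguments. Unset Strict Implicit. Unset Printing Implicit Defensive.

Section Euclidean.
Variables (R : realType) (d : nat).
Notation vec := 'rV[R]_d.
Implicit Types (u v w : vec) (a b : R).

Lemma dotvC u v : dotv u v = dotv v u.
Proof. by apply: eq_bigr => i _; rewrite mulrC. Qed.

Lemma dotvDl u v w : dotv (u + v) w = dotv u w + dotv v w.
Proof. by rewrite /dotv -big_split; apply: eq_bigr => i _; rewrite mxE mulrDl. Qed.

Lemma dotvDr u v w : dotv w (u + v) = dotv w u + dotv w v.
Proof. by rewrite dotvC dotvDl !(dotvC w). Qed.

Lemma dotvZl a u v : dotv (a *: u) v = a * dotv u v.
Proof. by rewrite /dotv mulr_sumr; apply: eq_bigr => i _; rewrite mxE mulrA. Qed.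

Lemma dotvZr a u v : dotv v (a *: u) = a * dotv v u.
Proof. by rewrite dotvC dotvZl dotvC. Qed.

Lemma dotvNl u v : dotv (- u) v = - dotv u v.
Proof. by rewrite -scaleN1r dotvZl mulN1r. Qed.

Lemma dotvNr u v : dotv v (- u) = - dotv v u.
Proof. by rewrite dotvC dotvNl dotvC. Qed.

Lemma dotvBl u v w : dotv (u - v) w = dotv u w - dotv v w.
Proof. by rewrite dotvDl dotvNl. Qed.

Lemma dotvBr u v w : dotv w (u - v) = dotv w u - dotv w v.
Proof. by rewrite dotvDr dotvNr. Qed.

Lemma dotv0l v : dotv 0 v = 0.
Proof. by rewrite -(scale0r 0) dotvZl mul0r. Qed.

Lemma dotv0r v : dotv v 0 = 0.
Proof. by rewrite dotvC dotv0l. Qed.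

Lemma dotv_sumr (I : Type) (r : seq I) (F : I -> vec) v :
  dotv v (\sum_(i <- r) F i) = \sum_(i <- r) dotv v (F i).
Proof.
by elim/big_rec2: _ => [|i y1 y2 _ <-]; rewrite ?dotv0r ?dotvDr.
Qed.

Lemma dotv_suml (I : Type) (r : seq I) (F : I -> vec) v :
  dotv (\sum_(i <- r) F i) v = \sum_(i <- r) dotv (F i) v.
Proof. by rewrite dotvC dotv_sumr; apply: eq_bigr => i _; rewrite dotvC. Qed.

Lemma dotv_span2 u v a b a' b' :
  dotv (a *: u + b *: v) (a' *: u + b' *: v) =
  a * a' * dotv u u + (a * b' + b * a') * dotv u v + b * b' * dotv v v.
Proof. by rewrite !(dotvDl, dotvDr, dotvZl, dotvZr) (dotvC v u); ring. Qed.

Lemma dotvv_ge0 u : 0 <= dotv u u.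
Proof. by apply: sumr_ge0 => i _; rewrite -expr2 sqr_ge0. Qed.

Lemma enorm_ge0 u : 0 <= enorm u.
Proof. exact: sqrtr_ge0. Qed.

Lemma enorm_sqr u : enorm u ^+ 2 = dotv u u.
Proof. by rewrite sqr_sqrtr // dotvv_ge0. Qed.

Lemma enorm0 : enorm (0 : vec) = 0.
Proof. by rewrite /enorm dotv0l sqrtr0. Qed.

Lemma enorm_eq0 u : (enorm u == 0) = (u == 0).
Proof.
apply/eqP/eqP => [u0|->]; last exact: enorm0.
have : dotv u u == 0 by rewrite -enorm_sqr u0 expr0n.
rewrite psumr_eq0 => [/allP uu0|i _]; last by rewrite -expr2 sqr_ge0.
apply/rowP => i; rewrite mxE.
by have /implyP/(_ isT) := uu0 i (mem_index_enum i); rewrite mulf_eq0 orbb => /eqP.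
Qed.

Lemma enormZ a u : enorm (a *: u) = `|a| * enorm u.
Proof.
by rewrite /enorm dotvZl dotvZr mulrA -expr2 sqrtrM ?sqr_ge0 // sqrtr_sqr.
Qed.

Lemma enormN u : enorm (- u) = enorm u.
Proof. by rewrite -scaleN1r enormZ normrN normr1 mul1r. Qed.

Lemma enormB u v : enorm (u - v) = enorm (v - u).
Proof. by rewrite -enormN opprB. Qed.

Lemma enormB_sqr u v :
  enorm (u - v) ^+ 2 = enorm u ^+ 2 - 2 * dotv u v + enorm v ^+ 2.
Proof. by rewrite !enorm_sqr !(dotvBl, dotvBr) (dotvC v u); ring. Qed.

Lemma cauchy_schwarz u v : dotv u v <= enorm u * enorm v.
Proof.
have [->|u0] := eqVneq u 0; first by rewrite dotv0l enorm0 mul0r.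
have [->|v0] := eqVneq v 0; first by rewrite dotv0r enorm0 mulr0.
set a := enorm u; set b := enorm v.
have a_gt0 : 0 < a by rewrite lt_def enorm_eq0 u0 enorm_ge0.
have b_gt0 : 0 < b by rewrite lt_def enorm_eq0 v0 enorm_ge0.
have := dotvv_ge0 (b *: u - a *: v).
rewrite !(dotvBl, dotvBr, dotvZl, dotvZr) -!enorm_sqr -/a -/b (dotvC v u) => h.
by rewrite -(ler_pM2l (mulr_gt0 a_gt0 b_gt0)); nra.
Qed.

Lemma abs_dotv_le u v : `|dotv u v| <= enorm u * enorm v.
Proof.
rewrite ler_norml cauchy_schwarz andbT lerNl -dotvNl.
by apply: le_trans (cauchy_schwarz _ _) _; rewrite enormN.
Qed.

Lemma enormD u v : enorm (u + v) <= enorm u + enorm v.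
Proof.
rewrite -ler_sqr ?nnegrE ?addr_ge0 ?enorm_ge0 // -[v in u + v]opprK enormB_sqr.
rewrite enormN dotvNr sqrrD; have := cauchy_schwarz u v; lra.
Qed.

Lemma enorm_triangle u v w : enorm (u - w) <= enorm (u - v) + enorm (v - w).
Proof. by rewrite (_ : u - w = (u - v) + (v - w)) ?enormD // addrA subrK. Qed.

Lemma enorm_sum (I : Type) (r : seq I) (F : I -> vec) :
  enorm (\sum_(i <- r) F i) <= \sum_(i <- r) enorm (F i).
Proof.
elim/big_rec2: _ => [|i y1 y2 _ h]; first by rewrite enorm0.
by apply: le_trans (enormD _ _) _; rewrite lerD2l.
Qed.

Lemma mx_norm_le_enorm u : `|u| <= enorm u.
Proof.
rewrite (_ : `|u| = mx_norm u) // mx_normrE; apply/bigmax_leP; split=> [|[i j] _ /=].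
  exact: enorm_ge0.
rewrite (ord1 i) -ler_sqr ?nnegrE ?enorm_ge0 // enorm_sqr real_normK ?num_real //.
rewrite /dotv (bigD1 j) //= -expr2 lerDl.
by apply: sumr_ge0 => k _; rewrite -expr2 sqr_ge0.
Qed.

End Euclidean.

Section Gradient.
Variables (R : realType) (d : nat).
Notation vec := 'rV[R]_d.
Implicit Types (f g : vec -> R) (x v : vec).

Lemma diff_dotv_grad f x v : 'd f x v = dotv (grad f x) v.
Proof.
rewrite {1}(row_sum_delta v) linear_sum /dotv.
by apply: eq_bigr => j _; rewrite linearZ /= mxE mulrC.
Qed.

Lemma gradD f g x : differentiable f x -> differentiable g x ->
  grad (f + g) x = grad f x + grad g x.
Proof. by move=> df dg; apply/rowP => i; rewrite !mxE diffD. Qed.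

Lemma gradZ (k : R) f x : differentiable f x -> grad (k *: f) x = k *: grad f x.
Proof. by move=> df; apply/rowP => i; rewrite !mxE diffZ. Qed.

Definition mixture (I : Type) (r : seq I) (c : I -> R) (h : I -> vec -> R) (w : vec) : R :=
  \sum_(i <- r) c i * h i w.

Lemma mixture_cons (I : Type) (i : I) (r : seq I) c h :
  mixture (i :: r) c h = c i *: h i + mixture r c h.
Proof. by apply/funext => w; rewrite /mixture big_cons. Qed.

Lemma mixture_nil (I : Type) c h : mixture ([::] : seq I) c h = cst 0.
Proof. by apply/funext => w; rewrite /mixture big_nil. Qed.

Variables (I : eqType) (c : I -> R) (h : I -> vec -> R).

Lemma differentiable_mixture r x : {in r, forall i, differentiable (h i) x} ->
  differentiable (mixture r c h) x.
Proof.
elim: r => [|i r IHr] dh; first by rewrite mixture_nil.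
rewrite mixture_cons; apply: differentiableD; first exact/differentiableZ/dh/mem_head.
by apply: IHr => j jr; apply: dh; rewrite inE jr orbT.
Qed.

Lemma grad_mixture r x : {in r, forall i, differentiable (h i) x} ->
  grad (mixture r c h) x = \sum_(i <- r) c i *: grad (h i) x.
Proof.
elim: r => [|i r IHr] dh.
  by rewrite mixture_nil big_nil; apply/rowP => j; rewrite !mxE diff_cst.
have dhr : {in r, forall j, differentiable (h j) x}.
  by move=> j jr; apply: dh; rewrite inE jr orbT.
have dhi := dh i (mem_head i r).
rewrite mixture_cons big_cons gradD ?gradZ ?IHr //.
  exact: differentiableZ.
exact: differentiable_mixture.
Qed.

End Gradient.

Section MixtureConvexity.
Variables (R : realType) (d : nat) (mu L : R).
Variables (I : eqType) (r : seq I) (c : I -> R) (h : I -> 'rV[R]_d -> R).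
Hypothesis c_ge0 : {in r, forall i, 0 <= c i}.
Hypothesis c_sum1 : \sum_(i <- r) c i = 1.
Hypothesis h_diff : {in r, forall i, forall x, differentiable (h i) x}.

Lemma sum_weights_const (k : R) : \sum_(i <- r) c i * k = k.
Proof. by rewrite -mulr_suml c_sum1 mul1r. Qed.

Lemma mixture_L_smooth : {in r, forall i, L_smooth L (h i)} ->
  L_smooth L (mixture r c h).
Proof.
move=> hL x y; rewrite !grad_mixture // => [|i /h_diff//|i /h_diff//].
rewrite -sumrB -(sum_weights_const (L * _)).
apply: le_trans (enorm_sum _ _) _; rewrite !big_seq; apply: ler_sum => i ir.
by rewrite -scalerBr enormZ ger0_norm ?c_ge0 // ler_wpM2l ?c_ge0 ?hL.
Qed.

Lemma mixture_strongly_convex : {in r, forall i, strongly_convex mu (h i)} ->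
  strongly_convex mu (mixture r c h).
Proof.
move=> hS x y; rewrite grad_mixture => [|i /h_diff//].
rewrite dotv_suml -(sum_weights_const (mu / 2 * _)) /mixture -!big_split /=.
rewrite !big_seq; apply: ler_sum => i ir.
by rewrite dotvZl -!mulrDr ler_wpM2l ?c_ge0 ?hS.
Qed.

End MixtureConvexity.

Section SmoothStronglyConvex.
Variables (R : realType) (d : nat).
Notation vec := 'rV[R]_d.
Implicit Types (F : vec -> R) (x y v : vec).

Lemma is_derive_line F x v (s : R) : (forall z, differentiable F z) ->
  is_derive s 1 (fun t : R => F (x + t *: v)) (dotv (grad F (x + s *: v)) v).
Proof.
move=> dF.
have shift_line : (fun h : R => h^-1 *: (((fun t : R => F (x + t *: v)) \o shift s) (h *: 1)
      - F (x + s *: v))) =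
    (fun h : R => h^-1 *: ((F \o shift (x + s *: v)) (h *: v) - F (x + s *: v))).
  apply/funext => h /=; congr (_ *: (F _ - _)).
  by rewrite [h *: 1]mulr1 scalerDl addrCA addrA.
apply: DeriveDef.
  by rewrite /derivable shift_line; apply: diff_derivable.
by rewrite /derive shift_line -/(derive F _ v) deriveE // diff_dotv_grad.
Qed.

Lemma L_smooth_quadratic_upper F (L : R) x y :
  (forall z, differentiable F z) -> L_smooth L F ->
  F y <= F x + dotv (grad F x) (y - x) + L / 2 * enorm (y - x) ^+ 2.
Proof.
move=> dF FL; set v := y - x; set c := dotv (grad F x) v.
set k := L / 2 * enorm v ^+ 2.
(* by smoothness, [psi' s = <grad F (x + s v) - grad F x, v> - 2 k s <= 0] *)
pose psi := (fun t : R => F (x + t *: v)) - c \*: (id : R -> R) - k \*: ((id : R -> R) * id).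
have dpsi (s : R) : is_derive s 1 psi
    (dotv (grad F (x + s *: v)) v - c *: 1 - k *: (s *: 1 + s *: 1)).
  exact: is_deriveB (is_deriveB (is_derive_line x v s dF) (is_deriveZ c (is_derive_id s 1)))
    (is_deriveZ k (is_deriveM (is_derive_id s 1) (is_derive_id s 1))).
have psi_derivable (s : R) : derivable psi s 1 by case: (dpsi s).
have psi_cont := derivable_within_continuous (i := `[0, 1]%R) (fun s _ => psi_derivable s).
have psi'_le0 (s : R) : s \in `]0, 1[ -> derive1 psi s <= 0.
  rewrite in_itv /= => /andP[s_gt0 _].
  rewrite derive1E derive_val /GRing.scale /= !mulr1.
  have : dotv (grad F (x + s *: v)) v - c <= L * s * enorm v ^+ 2.
    rewrite -dotvBl; apply: le_trans (cauchy_schwarz _ _) _.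
    apply: le_trans (ler_wpM2r (enorm_ge0 _) (FL _ _)) _.
    by rewrite addrAC subrr add0r enormZ ger0_norm ?(ltW s_gt0) // expr2 !mulrA.
  by rewrite /k; lra.
have : psi 1 <= psi 0.
  apply: (ler0_derive1_le_cc (fun s _ => psi_derivable s) psi'_le0 psi_cont);
    by rewrite ?in_itv /= ?lexx ?ler01.
have psiE t : psi t = F (x + t *: v) - c * t - k * (t * t) by [].
rewrite !psiE scale0r addr0 scale1r /v [x + _]addrC subrK !mulr0 !mulr1 !subr0.
lra.
Qed.

Lemma grad_minimizer F x : (forall z, differentiable F z) -> is_minimizer F x ->
  grad F x = 0.
Proof.
move=> dF xmin; set g := grad F x; apply/eqP; rewrite -enorm_eq0 -sqrf_eq0 enorm_sqr.
have line_min : is_derive (0 : R) (1 : R) (fun t : R => F (x + t *: g)) 0.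
  apply: (derive1_at_min (a := -1) (b := 1)).
  - by lra.
  - by move=> t _; case: (is_derive_line x g t dF).
  - by rewrite in_itv /= ltrN10 ltr01.
  - by move=> t _; rewrite scale0r addr0; apply: xmin.
have := is_derive_line x g 0 dF; rewrite scale0r addr0 -/g => line_grad.
by rewrite -(derive_val (is_derive := line_grad)) (derive_val (is_derive := line_min)).
Qed.

End SmoothStronglyConvex.

Section Minimizers.
Variables (R : realType) (d : nat) (mu : R) (F : 'rV[R]_d -> R).
Hypothesis mu_gt0 : 0 < mu.
Hypothesis F_diff : forall x, differentiable F x.
Hypothesis F_convex : strongly_convex mu F.

Lemma strongly_convex_dist_le_grad x xs : is_minimizer F xs ->
  mu * enorm (x - xs) <= enorm (grad F x).
Proof.
move=> xs_min; have := F_convex x xs; have := F_convex xs x.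
rewrite grad_minimizer // dotv0l addr0 (enormB xs x) -(opprB x xs) dotvNr => h1 h2.
have mu_sqr_le : mu * enorm (x - xs) ^+ 2 <= enorm (grad F x) * enorm (x - xs).
  by apply: le_trans (cauchy_schwarz _ _); lra.
have [->|xs_ne] := eqVneq (enorm (x - xs)) 0; first by rewrite mulr0 enorm_ge0.
have dist_gt0 : 0 < enorm (x - xs) by rewrite lt_def xs_ne enorm_ge0.
by rewrite -(ler_pM2r dist_gt0) -mulrA -expr2.
Qed.

Lemma strongly_convex_exists_minimizer : exists xs, is_minimizer F xs.
Proof.
pose A := [set x | F x <= F 0]%classic.
(* strong convexity at 0 confines the sublevel set [A] to a ball of radius 2 |grad F 0| / mu *)
have A_bounded x : A x -> enorm x <= 2 / mu * enorm (grad F 0).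
  rewrite /A /= => Ax; have := F_convex 0 x; rewrite !subr0 => h.
  have h' : mu / 2 * enorm x ^+ 2 <= enorm (grad F 0) * enorm x.
    have := abs_dotv_le (grad F 0) x; have := ler_norm (- dotv (grad F 0) x).
    rewrite normrN; lra.
  have [->|x_ne] := eqVneq x 0.
    by rewrite enorm0 mulr_ge0 ?enorm_ge0 // divr_ge0 // ltW.
  have x_gt0 : 0 < enorm x by rewrite lt_def enorm_eq0 x_ne enorm_ge0.
  rewrite -(ler_pM2r x_gt0) -(ler_pM2l (divr_gt0 mu_gt0 (ltr0Sn _ 1))).
  have -> : mu / 2 * (2 / mu * enorm (grad F 0) * enorm x) = enorm (grad F 0) * enorm x.
    by field; rewrite gt_eqF.
  by move: h'; rewrite expr2 mulrA.
have A_compact : compact A.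
  apply: bounded_closed_compact.
    exists (2 / mu * enorm (grad F 0)); split; first exact: num_real.
    move=> M lt_M x Ax; apply: le_trans (mx_norm_le_enorm x) _.
    exact: le_trans (A_bounded x Ax) (ltW lt_M).
  apply: (@preimage_closed _ _ _ [set r | r <= F 0]%classic); last exact: closed_le.
  by move=> x _; apply: differentiable_continuous.
have F_cont : {within A, continuous F}%classic.
  by apply: continuous_subspaceT => x; apply: differentiable_continuous.
have [xs Axs xs_min] := EVT_min_rV (ex_intro _ 0 (lexx (F 0))) A_compact F_cont.
have {}Axs : F xs <= F 0 by move: Axs; rewrite inE.
exists xs => v; have [Fv|/ltW Fv] := leP (F v) (F 0).
  by apply: xs_min; rewrite inE.
exact: le_trans Axs Fv.
Qed.

End Minimizers.

Section GradientDescent.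
Variables (R : realType) (d : nat) (mu L eta : R) (F : 'rV[R]_d -> R).
Hypothesis F_diff : forall x, differentiable F x.
Hypothesis F_smooth : L_smooth L F.
Hypothesis F_convex : strongly_convex mu F.

(* The [s]-form of the co-coercivity of the (L - mu)-smooth convex map
   [grad F - mu id]; it avoids dividing by [L - mu], which may vanish. *)
Lemma shifted_grad_cocoercive x xs (s : R) : is_minimizer F xs ->
  (2 * s - (L - mu) * s ^+ 2) * dotv (grad F x - mu *: (x - xs)) (grad F x - mu *: (x - xs))
  <= dotv (grad F x - mu *: (x - xs)) (x - xs).
Proof.
move=> xs_min; set e := x - xs; set q := grad F x - mu *: e.
have g0 := grad_minimizer F_diff xs_min.
have gE : grad F x = 1 *: q + mu *: e by rewrite scale1r subrK.
(* sum the four quadratic bounds between [x], [xs] and the test points [w], [z] *)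
pose w := xs + s *: q; pose z := x - s *: q.
have h1 := F_convex x w; have h2 := L_smooth_quadratic_upper xs w F_diff F_smooth.
have h3 := L_smooth_quadratic_upper x z F_diff F_smooth; have h4 := F_convex xs z.
rewrite g0 dotv0l addr0 in h2; rewrite g0 dotv0l addr0 in h4.
have wx : w - x = s *: q + (-1) *: e by apply/rowP => i; rewrite !mxE; ring.
have wxs : w - xs = s *: q + 0 *: e by apply/rowP => i; rewrite !mxE; ring.
have zx : z - x = (- s) *: q + 0 *: e by apply/rowP => i; rewrite !mxE; ring.
have zxs : z - xs = (- s) *: q + 1 *: e by apply/rowP => i; rewrite !mxE; ring.
rewrite wx wxs zx zxs gE !enorm_sqr !dotv_span2 in h1 h2 h3 h4.
rewrite (dotvC q e) in h1 h2 h3 h4 *; lra.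
Qed.

Hypotheses (eta_gt0 : 0 < eta) (eta_le : eta <= 2 / (mu + L)) (eta_mu_lt1 : eta * mu < 1).

Lemma gd_step_contraction x xs : is_minimizer F xs ->
  enorm (x - eta *: grad F x - xs) <= (1 - eta * mu) * enorm (x - xs).
Proof.
move=> xs_min; set e := x - xs; set q := grad F x - mu *: e.
have rho_gt0 : 0 < 1 - eta * mu by rewrite subr_gt0.
have muL_gt0 : 0 < mu + L.
  by rewrite -invr_gt0 -(pmulr_rgt0 _ (ltr0Sn R 1)); apply: lt_le_trans eta_le.
(* for this [s] the step-size condition [eta (mu + L) <= 2] reads [(L - mu) s <= 1] *)
set s := eta / (2 * (1 - eta * mu)).
have sE : 2 * (1 - eta * mu) * s = eta by rewrite /s mulrC divfK ?mulf_neq0 ?gt_eqF.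
have Ls_le1 : (L - mu) * s <= 1.
  rewrite /s mulrA ler_pdivrMr ?mulr_gt0 // mul1r.
  by move: eta_le; rewrite ler_pdivlMr //; lra.
have qq_ge0 := dotvv_ge0 q.
have key : eta * dotv q q <= 2 * (1 - eta * mu) * dotv q e.
  have := shifted_grad_cocoercive x s xs_min.
  move=> /(ler_wpM2l (ltW (mulr_gt0 (ltr0Sn _ 1) rho_gt0))).
  rewrite -/e -/q mulrA (_ : _ * (2 * s - _) = eta * (2 - (L - mu) * s)); last first.
    by rewrite -[in RHS]sE; ring.
  have : 0 <= eta * (1 - (L - mu) * s) * dotv q q.
    by rewrite !mulr_ge0 ?subr_ge0 // ltW.
  lra.
rewrite -ler_sqr ?nnegrE ?mulr_ge0 ?enorm_ge0 ?(ltW rho_gt0) //.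
have -> : x - eta *: grad F x - xs = (- eta) *: q + (1 - eta * mu) *: e.
  by apply/rowP => i; rewrite !mxE; ring.
rewrite exprMn !enorm_sqr dotv_span2.
have := ler_wpM2l (ltW eta_gt0) key; lra.
Qed.

Lemma gd_steps_contraction (E : nat) x xs : is_minimizer F xs ->
  enorm (gd_steps eta F E x - xs) <= (1 - eta * mu) ^+ E * enorm (x - xs).
Proof.
move=> xs_min; elim: E => [|E IH]; first by rewrite expr0 mul1r.
rewrite /gd_steps iterS -/(gd_steps eta F E x).
apply: le_trans (gd_step_contraction _ xs_min) _.
by rewrite exprS -mulrA ler_wpM2l // subr_ge0 ltW.
Qed.

Lemma gd_steps_tracking (E : nat) x xs xs' : is_minimizer F xs' ->
  enorm (gd_steps eta F E x - xs') <=
  (1 - eta * mu) ^+ E * (enorm (x - xs) + enorm (xs - xs')).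
Proof.
move=> xs'_min; apply: le_trans (gd_steps_contraction E x xs'_min) _.
by rewrite ler_wpM2l ?enorm_triangle // exprn_ge0 // subr_ge0 ltW.
Qed.

End GradientDescent.

Lemma add_le_sqrt_ratio (R : rcfType) (mu L a b V C : R) :
  0 < mu -> mu <= L -> 0 <= a -> 0 <= b -> 0 <= V -> 0 <= C ->
  a ^+ 2 + V <= C ^+ 2 -> mu * b ^+ 2 <= (L - mu) * V ->
  a + b <= Num.sqrt (L / mu) * C.
Proof.
move=> mu_gt0 muL a_ge0 b_ge0 V_ge0 C_ge0 aV muV.
have mu_ge0 := ltW mu_gt0; have L_ge0 := le_trans mu_ge0 muL.
(* AM-GM on [(L - mu) a^2] and [mu V] bounds the cross term [2 mu a b] *)
have cross : 2 * mu * a * b <= (L - mu) * a ^+ 2 + mu * V.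
  have rhs_ge0 : 0 <= (L - mu) * a ^+ 2 + mu * V.
    by apply: addr_ge0; apply: mulr_ge0; rewrite ?subr_ge0 ?sqr_ge0.
  rewrite -ler_sqr ?nnegrE ?mulr_ge0 //.
  have := ler_wpM2l (mulr_ge0 mu_ge0 (sqr_ge0 a)) muV.
  have := sqr_ge0 ((L - mu) * a ^+ 2 - mu * V); lra.
have key : mu * (a + b) ^+ 2 <= L * C ^+ 2.
  have := ler_wpM2l L_ge0 aV; nra.
rewrite -ler_sqr ?nnegrE ?addr_ge0 ?mulr_ge0 ?sqrtr_ge0 //.
by rewrite exprMn sqr_sqrtr ?divr_ge0 // mulrAC ler_pdivlMr // mulrC.
Qed.

Section MixtureMinimizer.
Variables (R : realType) (d : nat).
Notation vec := 'rV[R]_d.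
Variables (I : eqType) (r : seq I) (c : I -> R).
Hypothesis c_ge0 : {in r, forall i, 0 <= c i}.
Hypothesis c_sum1 : \sum_(i <- r) c i = 1.

Definition barycenter (x : I -> vec) : vec := \sum_(i <- r) c i *: x i.

Lemma weighted_sqdist_expand (x : I -> vec) (y : vec) :
  \sum_(i <- r) c i * enorm (y - x i) ^+ 2 =
  enorm y ^+ 2 - 2 * dotv y (barycenter x) + \sum_(i <- r) c i * enorm (x i) ^+ 2.
Proof.
rewrite /barycenter dotv_sumr -[enorm y ^+ 2](sum_weights_const c_sum1).
rewrite mulr_sumr -!sumrB -big_split /=; apply: eq_bigr => i _.
by rewrite enormB_sqr dotvZr; ring.
Qed.

Lemma weighted_sqdist_split (x : I -> vec) (u : vec) :
  \sum_(i <- r) c i * enorm (u - x i) ^+ 2 =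
  enorm (u - barycenter x) ^+ 2 + \sum_(i <- r) c i * enorm (barycenter x - x i) ^+ 2.
Proof. by rewrite !weighted_sqdist_expand enormB_sqr -(enorm_sqr (barycenter x)); ring. Qed.

Variables (mu L C : R) (h : I -> vec -> R) (xs : I -> vec).
Hypotheses (mu_gt0 : 0 < mu) (muL : mu <= L) (C_ge0 : 0 <= C).
Hypothesis h_diff : {in r, forall i, forall x, differentiable (h i) x}.
Hypothesis h_smooth : {in r, forall i, L_smooth L (h i)}.
Hypothesis h_convex : {in r, forall i, strongly_convex mu (h i)}.
Hypothesis xs_min : {in r, forall i, is_minimizer (h i) (xs i)}.
Hypothesis xs_le : {in r, forall i, enorm (xs i) <= C}.

(* Comparing the quadratic bounds of the [h i] around their minimizers [xs i]
   at [wb] and at the barycenter [v] of the [xs i] confines [wb] near [v]. *)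
Lemma mixture_minimizer_enorm_le wb : is_minimizer (mixture r c h) wb ->
  enorm wb <= Num.sqrt (L / mu) * C.
Proof.
move=> wb_min; set v := barycenter xs.
set V := \sum_(i <- r) c i * enorm (v - xs i) ^+ 2.
have grad0 i : i \in r -> grad (h i) (xs i) = 0.
  by move=> ir; apply: grad_minimizer (h_diff ir) (xs_min ir).
have lower : \sum_(i <- r) c i * h i (xs i) +
    mu / 2 * \sum_(i <- r) c i * enorm (wb - xs i) ^+ 2 <= mixture r c h wb.
  rewrite /mixture mulr_sumr -big_split /= !big_seq; apply: ler_sum => i ir.
  rewrite mulrCA -mulrDr ler_wpM2l ?c_ge0 //.
  by have := h_convex ir (xs i) wb; rewrite grad0 // dotv0l addr0.
have upper : mixture r c h v <= \sum_(i <- r) c i * h i (xs i) + L / 2 * V.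
  rewrite /mixture mulr_sumr -big_split /= !big_seq; apply: ler_sum => i ir.
  rewrite mulrCA -mulrDr ler_wpM2l ?c_ge0 //.
  have := L_smooth_quadratic_upper (xs i) v (h_diff ir) (h_smooth ir).
  by rewrite grad0 // dotv0l addr0.
have V_ge0 : 0 <= V.
  by rewrite /V big_seq sumr_ge0 // => i ir; rewrite mulr_ge0 ?c_ge0 ?sqr_ge0.
have mu_dist : mu * enorm (wb - v) ^+ 2 <= (L - mu) * V.
  have := le_trans lower (le_trans (wb_min v) upper).
  rewrite weighted_sqdist_split -/v -/V; lra.
have v_V : enorm v ^+ 2 + V <= C ^+ 2.
  have := weighted_sqdist_split xs 0; rewrite -/v -/V sub0r enormN => <-.
  rewrite -(sum_weights_const c_sum1 (C ^+ 2)) !big_seq; apply: ler_sum => i ir.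
  by rewrite sub0r enormN ler_wpM2l ?c_ge0 // ler_sqr ?nnegrE ?enorm_ge0 ?xs_le.
have := enorm_triangle wb v 0; rewrite !subr0 addrC => /le_trans; apply.
exact: add_le_sqrt_ratio mu_gt0 muL (enorm_ge0 _) (enorm_ge0 _) V_ge0 C_ge0 v_V mu_dist.
Qed.

End MixtureMinimizer.

Lemma geometric_sumB (R : comPzRingType) (x : R) t :
  (1 - x) * \sum_(1 <= i < t.+1) x ^+ (t - i) = 1 - x ^+ t.
Proof.
elim: t => [|t IH]; first by rewrite big_geq // mulr0 expr0 subrr.
rewrite big_nat_recr //= subnn expr0 mulrDr.
rewrite (eq_big_nat _ _ (F2 := fun i => x * x ^+ (t - i))); last first.
  by move=> i /andP[_ it]; rewrite subSn // exprS.
by rewrite -mulr_sumr mulrCA IH exprS; ring.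
Qed.

Section ExponentialAverage.
Variables (R : realType) (d : nat) (mu L C gamma : R) (f : nat -> 'rV[R]_d -> R).
Hypotheses (gamma_gt0 : 0 < gamma) (gamma_lt1 : gamma < 1).
Local Open Scope classical_set_scope.

Definition Favg_weight (t i : nat) : R :=
  (1 - gamma) / (1 - gamma ^+ t) * gamma ^+ (t - i).

Lemma FavgE t : Favg gamma f t = mixture (index_iota 1 t.+1) (Favg_weight t) f.
Proof. by []. Qed.

Lemma subr_expr_gt0 t : (1 <= t)%N -> 0 < 1 - gamma ^+ t.
Proof. by case: t => // t _; rewrite subr_gt0 exprn_ilt1 // ltW. Qed.

Lemma Favg_weight_ge0 t i : (1 <= t)%N -> 0 <= Favg_weight t i.
Proof.
move=> t_ge1; apply: mulr_ge0; last exact/exprn_ge0/ltW.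
by apply: divr_ge0; [rewrite subr_ge0 ltW | exact/ltW/subr_expr_gt0].
Qed.

Lemma sum_Favg_weight t : (1 <= t)%N -> \sum_(1 <= i < t.+1) Favg_weight t i = 1.
Proof.
move=> t_ge1; rewrite -mulr_sumr mulrAC geometric_sumB.
by rewrite mulfV // gt_eqF ?subr_expr_gt0.
Qed.

Lemma Favg_weight_diag_cvg :
  (fun t => Favg_weight t.+1 t.+1) @ \oo --> 1 - gamma.
Proof.
rewrite (cvg_shiftS (fun t => Favg_weight t t)).
have -> : (fun t => Favg_weight t t) = (fun t => (1 - gamma) * (1 - gamma ^+ t)^-1).
  by apply/funext => t; rewrite /Favg_weight subnn expr0 mulr1.
have pow_cvg : GRing.exp gamma @ \oo --> (0 : R).
  by apply: cvg_expr; rewrite ger0_norm ?ltW.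
have sub_cvg : (cst 1 - GRing.exp gamma) @ \oo --> (1 - 0 : R).
  by apply: cvgB => //; apply: cvg_cst.
rewrite subr0 in sub_cvg.
have inv_cvg : (fun t => (1 - gamma ^+ t)^-1) @ \oo --> (1^-1 : R).
  by apply: cvgV sub_cvg; apply: oner_neq0.
rewrite invr1 in inv_cvg.
have : (fun t => (1 - gamma) * (1 - gamma ^+ t)^-1) @ \oo --> (1 - gamma) * 1.
  exact: cvgMl_tmp.
by rewrite mulr1.
Qed.

Lemma Favg_weightS t i : (1 <= t)%N -> (i <= t)%N ->
  (1 - Favg_weight t.+1 t.+1) * Favg_weight t i = Favg_weight t.+1 i.
Proof.
move=> t_ge1 it; have := subr_expr_gt0 t_ge1; have := subr_expr_gt0 (ltn0Sn t).
rewrite /Favg_weight subnn expr0 mulr1 subSn // !exprS => gt1_gt0 gt_gt0.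
by field; rewrite !gt_eqF.
Qed.

Lemma FavgS t : (1 <= t)%N -> Favg gamma f t.+1 =
  Favg_weight t.+1 t.+1 *: f t.+1 + (1 - Favg_weight t.+1 t.+1) *: Favg gamma f t.
Proof.
move=> t_ge1; apply/funext => w; rewrite !FavgE /mixture big_nat_recr //= addrC.
rewrite !fctE; congr (_ + _); rewrite scaler_sumr.
by apply: eq_big_nat => i /andP[_ it]; rewrite -Favg_weightS // -mulrA.
Qed.

Hypotheses (mu_gt0 : 0 < mu) (muL : mu <= L) (C_ge0 : 0 <= C).
Hypothesis f_diff : forall t, (1 <= t)%N -> forall x, differentiable (f t) x.
Hypothesis f_smooth : forall t, (1 <= t)%N -> L_smooth L (f t).
Hypothesis f_convex : forall t, (1 <= t)%N -> strongly_convex mu (f t).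

Lemma mem_index_iota1 t i : i \in index_iota 1 t.+1 -> (1 <= i)%N.
Proof. by rewrite mem_index_iota => /andP[]. Qed.

Lemma Favg_differentiable t :
  (1 <= t)%N -> forall x, differentiable (Favg gamma f t) x.
Proof.
by move=> t_ge1 x; apply: differentiable_mixture => i /mem_index_iota1/f_diff.
Qed.

Lemma Favg_L_smooth t : (1 <= t)%N -> L_smooth L (Favg gamma f t).
Proof.
move=> t_ge1; apply: mixture_L_smooth.
- by move=> i _; apply: Favg_weight_ge0.
- exact: sum_Favg_weight.
- by move=> i /mem_index_iota1/f_diff.
- by move=> i /mem_index_iota1/f_smooth.
Qed.

Lemma Favg_strongly_convex t : (1 <= t)%N -> strongly_convex mu (Favg gamma f t).
Proof.
move=> t_ge1; apply: mixture_strongly_convex.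
- by move=> i _; apply: Favg_weight_ge0.
- exact: sum_Favg_weight.
- by move=> i /mem_index_iota1/f_diff.
- by move=> i /mem_index_iota1/f_convex.
Qed.

Hypothesis f_min_le :
  forall t, (1 <= t)%N -> forall ws, is_minimizer (f t) ws -> enorm ws <= C.

Lemma exists_minimizers : exists ws : nat -> 'rV[R]_d,
  forall t, (1 <= t)%N -> is_minimizer (f t) (ws t).
Proof.
have /choice[ws wsP] t : exists ws, (1 <= t)%N -> is_minimizer (f t) ws.
  have [t_ge1|] := leqP 1 t; last by exists 0.
  have [ws ?] := strongly_convex_exists_minimizer mu_gt0 (f_diff t_ge1) (f_convex t_ge1).
  by exists ws.
by exists ws.
Qed.

Lemma Favg_minimizer_enorm_le t wb :
  (1 <= t)%N -> is_minimizer (Favg gamma f t) wb -> enorm wb <= Num.sqrt (L / mu) * C.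
Proof.
move=> t_ge1; have [ws wsP] := exists_minimizers.
have ws_min i : i \in index_iota 1 t.+1 -> is_minimizer (f i) (ws i).
  by move=> /mem_index_iota1/wsP.
apply: (mixture_minimizer_enorm_le _ _ mu_gt0 muL C_ge0 _ _ _ ws_min).
- by move=> i _; apply: Favg_weight_ge0.
- exact: sum_Favg_weight.
- by move=> i /mem_index_iota1/f_diff.
- by move=> i /mem_index_iota1/f_smooth.
- by move=> i /mem_index_iota1/f_convex.
- by move=> i ir; apply: f_min_le i (mem_index_iota1 ir) _ (ws_min i ir).
Qed.

Lemma grad_FavgS t x : (1 <= t)%N -> grad (Favg gamma f t.+1) x =
  Favg_weight t.+1 t.+1 *: grad (f t.+1) x +
  (1 - Favg_weight t.+1 t.+1) *: grad (Favg gamma f t) x.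
Proof.
move=> t_ge1; have fS_diff := f_diff (ltn0Sn t) x.
have F_diff := Favg_differentiable t_ge1 x.
by rewrite FavgS // gradD ?gradZ //; apply: differentiableZ.
Qed.

(* At [wb], a minimizer of [F_t], only the newly added [f_(t+1)] contributes to
   the gradient of [F_(t+1)], with the small weight [Favg_weight (t+1) (t+1)]. *)
Lemma Favg_minimizer_drift t wb wb' : (1 <= t)%N ->
  is_minimizer (Favg gamma f t) wb -> is_minimizer (Favg gamma f t.+1) wb' ->
  enorm (wb - wb') <= Favg_weight t.+1 t.+1 * Cprime mu L C.
Proof.
move=> t_ge1 wb_min wb'_min; have [ws wsP] := exists_minimizers.
have tS_ge1 := ltn0Sn t; set a := Favg_weight t.+1 t.+1.
have a_ge0 : 0 <= a by apply: Favg_weight_ge0.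
have grad_le :
    enorm (grad (Favg gamma f t.+1) wb) <= a * (L * (Num.sqrt (L / mu) * C + C)).
  rewrite grad_FavgS // (grad_minimizer (Favg_differentiable t_ge1) wb_min).
  rewrite scaler0 addr0 enormZ ger0_norm // ler_wpM2l //.
  rewrite -[grad _ wb]subr0 -(grad_minimizer (f_diff tS_ge1) (wsP _ tS_ge1)).
  apply: le_trans (f_smooth tS_ge1 _ _) _; rewrite ler_wpM2l ?(le_trans (ltW mu_gt0)) //.
  apply: le_trans (enorm_triangle _ 0 _) _; rewrite subr0 sub0r enormN.
  by rewrite lerD ?(Favg_minimizer_enorm_le t_ge1 wb_min) ?(f_min_le tS_ge1 (wsP _ tS_ge1)).
have := strongly_convex_dist_le_grad (Favg_differentiable tS_ge1)
  (Favg_strongly_convex tS_ge1) wb wb'_min.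
move=> /le_trans/(_ grad_le) dist_le.
have -> : a * Cprime mu L C = a * (L * (Num.sqrt (L / mu) * C + C)) / mu.
  by rewrite /Cprime; field; rewrite gt_eqF.
by rewrite ler_pdivlMr // mulrC.
Qed.

Lemma Favg_minimizer_drift_near (wbar : nat -> 'rV[R]_d) :
  (forall t, (1 <= t)%N -> is_minimizer (Favg gamma f t) (wbar t)) ->
  forall dl, 0 < dl ->
  \forall t \near \oo, enorm (wbar t - wbar t.+1) <= Cprime mu L C * (1 - gamma) + dl.
Proof.
move=> wbar_min dl dl_gt0.
have lim_cvg : (fun t => Favg_weight t.+1 t.+1 * Cprime mu L C) @ \oo -->
    (1 - gamma) * Cprime mu L C.
  exact: cvgMr_tmp Favg_weight_diag_cvg.
have lt_dl : (1 - gamma) * Cprime mu L C < (1 - gamma) * Cprime mu L C + dl.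
  by rewrite ltrDl.
have [N _ le_N] := @cvgr_le R _ _ _ _ _ lim_cvg _ lt_dl.
exists (maxn 1 N) => // t /=; rewrite geq_max => /andP[t_ge1 Nt].
apply: le_trans (Favg_minimizer_drift t_ge1 (wbar_min _ t_ge1) (wbar_min _ (ltn0Sn t))) _.
by rewrite [_ * (1 - gamma)]mulrC le_N.
Qed.

End ExponentialAverage.

Section Eventually.
Variable R : realType.
Local Open Scope classical_set_scope.

Lemma limn_esup_le_near (u : R^nat) (l : R) :
  (forall dl, 0 < dl -> \forall n \near \oo, u n <= l + dl) ->
  (limn_esup (fun n => (u n)%:E) <= l%:E)%E.
Proof.
move=> u_le; apply/lee_addgt0Pr => dl dl_gt0; rewrite -EFinD.
pose V := [set n | u n <= l + dl].
apply: (@le_trans _ _ (ereal_sup ((fun n => (u n)%:E) @` V))).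
  by apply: ereal_inf_lbound; exists V => //; apply: u_le.
by apply: ge_ereal_sup => _ [n /= un <-]; rewrite lee_fin.
Qed.

Lemma contraction_eventually_le (e D : R^nat) (rho beta : R) :
  0 <= rho -> rho < 1 ->
  (\forall t \near \oo, e t.+1 <= rho * (e t + D t)) ->
  (forall dl, 0 < dl -> \forall t \near \oo, D t <= beta + dl) ->
  forall dl, 0 < dl -> \forall t \near \oo, e t <= rho * beta / (1 - rho) + dl.
Proof.
move=> rho_ge0 rho_lt1 e_rec D_le dl dl_gt0.
have rho'_gt0 : 0 < 1 - rho by rewrite subr_gt0.
have rho_dl : rho * dl <= dl by rewrite ler_piMl ?ltW.
(* [M] is the fixed point of [x |-> rho (x + beta + dl')], up to which [e] contracts *)
pose dl' := dl * (1 - rho) / 2; pose M := rho * (beta + dl') / (1 - rho).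
have dl'_gt0 : 0 < dl' by rewrite !mulr_gt0.
have ME : M = rho * beta / (1 - rho) + rho * dl / 2.
  by rewrite /M /dl'; field; rewrite gt_eqF.
have MrhoE : M * (1 - rho) = rho * (beta + dl') by rewrite /M divfK ?gt_eqF.
have [T _ e_recM] : \forall t \near \oo, e t.+1 - M <= rho * (e t - M).
  apply: filterS2 e_rec (D_le _ dl'_gt0) => t e_le /(ler_wpM2l rho_ge0); lra.
have e_geo n : e (T + n)%N - M <= rho ^+ n * (e T - M).
  elim: n => [|n IH]; first by rewrite addn0 expr0 mul1r.
  rewrite addnS exprSr -mulrA mulrCA; apply: le_trans (e_recM _ (leq_addr _ _)) _.
  exact: ler_wpM2l.
have geo_cvg : (fun n => rho ^+ n * (e T - M)) @ \oo --> 0.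
  rewrite -(mul0r (e T - M)); apply: cvgMr_tmp; apply: cvg_expr.
  by rewrite ger0_norm.
have [N _ geo_le] := @cvgr_le R _ _ _ _ _ geo_cvg _ (divr_gt0 dl_gt0 (ltr0Sn R 1)).
exists (T + N)%N => // t TNt; have Tt := leq_trans (leq_addr N T) TNt.
have tTN : (N <= t - T)%N by rewrite leq_subRL.
have := geo_le _ tTN; have := e_geo (t - T)%N; rewrite subnKC //; lra.
Qed.

End Eventually.

Lemma Cprime_ge0 (R : realType) (mu L C : R) : 0 < mu -> 0 <= L -> 0 <= C ->
  0 <= Cprime mu L C.
Proof.
move=> mu_gt0 L_ge0 C_ge0; apply: mulr_ge0; first exact: addr_ge0 ler01 (sqrtr_ge0 _).
by rewrite divr_ge0 ?mulr_ge0 // ltW.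
Qed.

Section Threshold.
Variables (R : realType) (mu L C gamma eta : R).
Hypothesis B_ge0 : 0 <= Cprime mu L C * (1 - gamma).
Hypotheses (eta_mu_gt0 : 0 < eta * mu) (eta_mu_lt1 : eta * mu < 1).

Lemma ln_contraction_lt0 : ln (1 - eta * mu) < 0.
Proof. by apply: ln_lt0; rewrite subr_gt0 eta_mu_lt1 /= ltrBlDr ltrDl. Qed.

Lemma E_threshold_pow_le (E : nat) eps : 0 < eps ->
  E_threshold mu L C gamma eta eps <= E%:R ->
  (1 - eta * mu) ^+ E * (Cprime mu L C * (1 - gamma) + eps) <= eps.
Proof.
move=> eps_gt0; set B := Cprime mu L C * (1 - gamma).
have Beps_gt0 : 0 < B + eps by rewrite ltr_wpDl.
rewrite /E_threshold -/B ler_ndivrMr ?ln_contraction_lt0 // mulr_natl -lnXn ?subr_gt0 //.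
by rewrite ler_ln ?posrE ?divr_gt0 ?exprn_gt0 ?subr_gt0 // ler_pdivlMr.
Qed.

Lemma E_threshold_le_log : exists K delta : R, 0 < delta /\
  forall eps : R, 0 < eps -> eps < delta ->
    E_threshold mu L C gamma eta eps <= K * ln (1 / eps).
Proof.
set B := Cprime mu L C * (1 - gamma); set l := ln (1 - eta * mu).
have l_lt0 : l < 0 := ln_contraction_lt0.
(* for [eps < 1 / (B + 1)] the numerator [ln (eps / (B + eps))] is at least [2 ln eps] *)
exists (2 / - l), (1 / (B + 1)); split; first by rewrite divr_gt0 ?ltr_wpDl.
move=> eps eps_gt0 eps_lt.
have Beps_gt0 : 0 < B + eps by rewrite ltr_wpDl.
have eps_Beps : eps * (B + eps) <= 1.
  have : eps * (B + 1) < 1 by rewrite -ltr_pdivlMr ?ltr_wpDl.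
  have : eps < 1.
    by apply: lt_le_trans eps_lt _; rewrite ler_pdivrMr ?ltr_wpDl // mul1r lerDr.
  nra.
have : ln eps + ln (B + eps) <= 0 by rewrite -lnM ?posrE // ln_le0.
rewrite /E_threshold -/B -/l ln_div ?posrE // div1r lnV ?posrE //.
have -> : 2 / - l * - ln eps = 2 * ln eps / l by field; rewrite lt_eqF.
by rewrite ler_nM2r ?invr_lt0 //; lra.
Qed.

End Threshold.

Unset Implicit Arguments.

Theorem proposition3 (R : realType) (d : nat) (mu L C gamma eta : R)
  (f : nat -> 'rV[R]_d -> R) :
  0 < mu -> mu <= L -> 0 < C -> 0 < gamma -> gamma < 1 ->
  (forall t, (1 <= t)%N -> forall x, differentiable (f t) x) ->
  (forall t, (1 <= t)%N -> L_smooth L (f t)) ->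
  (forall t, (1 <= t)%N -> strongly_convex mu (f t)) ->
  (forall t, (1 <= t)%N -> forall ws, is_minimizer (f t) ws -> enorm ws <= C) ->
  0 < eta -> eta <= 2 / (mu + L) -> eta * mu < 1 ->
  (forall (E : nat) (eps : R) (w wbar : nat -> 'rV[R]_d),
     (1 <= E)%N -> 0 < eps ->
     E_threshold mu L C gamma eta eps <= E%:R ->
     (forall t, w t.+1 = gd_steps eta (Favg gamma f t.+1) E (w t)) ->
     (forall t, (1 <= t)%N -> is_minimizer (Favg gamma f t) (wbar t)) ->
     (limn_esup (fun t => (enorm (w t - wbar t))%:E) <= eps%:E)%E)
  /\
  (exists K delta : R, 0 < delta /\
     forall eps : R, 0 < eps -> eps < delta ->
       E_threshold mu L C gamma eta eps <= K * ln (1 / eps)).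
Proof.
move=> mu_gt0 muL C_gt0 gamma_gt0 gamma_lt1 f_diff f_smooth f_convex f_min_le
  eta_gt0 eta_le eta_mu_lt1.
have eta_mu_gt0 : 0 < eta * mu by rewrite mulr_gt0.
set B := Cprime mu L C * (1 - gamma).
have B_ge0 : 0 <= B.
  rewrite mulr_ge0 ?subr_ge0 ?(ltW gamma_lt1) // Cprime_ge0 ?(ltW C_gt0) //.
  exact: le_trans (ltW mu_gt0) muL.
split; last exact: E_threshold_le_log.
move=> E eps w wbar E_ge1 eps_gt0 E_ge w_rec wbar_min.
set rho := (1 - eta * mu) ^+ E.
have rho_ge0 : 0 <= rho by rewrite exprn_ge0 // subr_ge0 ltW.
have rho_lt1 : rho < 1 by rewrite exprn_ilt1 ?subr_ge0 ?ltW ?gtrBl // -lt0n.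
have rho_B_le : rho * B / (1 - rho) <= eps.
  have := E_threshold_pow_le B_ge0 eta_mu_gt0 eta_mu_lt1 eps_gt0 E_ge.
  by rewrite -/B -/rho ler_pdivrMr ?subr_gt0 //; lra.
apply: limn_esup_le_near => dl dl_gt0.
have err_rec : \forall t \near \oo%classic, enorm (w t.+1 - wbar t.+1) <=
    rho * (enorm (w t - wbar t) + enorm (wbar t - wbar t.+1)).
  apply: nearW => t; rewrite w_rec /rho; have tS_ge1 := ltn0Sn t.
  exact (gd_steps_tracking (Favg_differentiable gamma f_diff tS_ge1)
    (Favg_L_smooth gamma_gt0 gamma_lt1 f_diff f_smooth tS_ge1)
    (Favg_strongly_convex gamma_gt0 gamma_lt1 f_diff f_convex tS_ge1)
    eta_gt0 eta_le eta_mu_lt1 E (w t) (wbar t) (wbar_min _ tS_ge1)).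
have drift := Favg_minimizer_drift_near gamma_gt0 gamma_lt1 mu_gt0 muL (ltW C_gt0)
  f_diff f_smooth f_convex f_min_le wbar_min.
apply: filterS (contraction_eventually_le rho_ge0 rho_lt1 err_rec drift dl_gt0) => t.
by rewrite -/B; lra.
Qed.
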